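(* For every $d\ge 3$ the cyclic Kautz digraph $CK(d,3)$ satisfies: (a) it is $(d-1)$-regular; (b) it has $N=d^3-d$ vertices and $(d+1)d(d-1)^2$ arcs; (c) its diameter is $5$; (d) it is (isomorphic to) the line digraph of the subKautz digraph $sK(d,2)$, and $sK(d,2)$ is obtained from the Kautz digraph $K(d,2)$ by removing all arcs belonging to digons (directed 2-cycles); (e) it is vertex-transitive; (f) it is Eulerian and Hamiltonian.
   Context: Kautz digraph $K(d,\ell)$: vertices $x_1\ldots x_\ell\in\mathbb Z_{d+1}^\ell$ with $x_i\neq x_{i+1}$; arcs $x_1\ldots x_\ell\to x_2\ldots x_\ell y$ for $y\neq x_\ell$. SubKautz digraph $sK(d,\ell)$: same vertices; arcs $x_1\ldots x_\ell\to x_2\ldots x_\ell x_{\ell+1}$ for $x_{\ell+1}\neq x_1,x_\ell$. Cyclic Kautz digraph $CK(d,\ell)$: vertices $x_1\ldots x_\ell$ with $x_i\neq x_{i+1}$ ($1\le i\le\ell-1$) and $x_\ell\neq x_1$; arcs $x_1\ldots x_\ell\to x_2\ldots x_\ell y$ for $y\neq x_2,x_\ell$. The line digraph $L(G)$ has the arcs of $G$ as vertices, with $(u,v)\to(w,z)$ iff $v=w$. *)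

From mathcomp Require Import all_boot.
Set Implicit Arguments. Unset Strict Implicit. Unset Printing Implicit Defensive.

Definition outdeg (T : finType) (e : rel T) (v : T) : nat := #|[set w | e v w]|.
Definition indeg (T : finType) (e : rel T) (v : T) : nat := #|[set w | e w v]|.

Definition regular_digraph (T : finType) (e : rel T) (k : nat) : Prop :=
  forall v : T, outdeg e v = k /\ indeg e v = k.

Definition num_arcs (T : finType) (e : rel T) : nat :=
  #|[set p : T * T | e p.1 p.2]|.

Definition walk_of_length (T : finType) (e : rel T) (u v : T) (k : nat) : Prop :=
  exists p : seq T, [/\ path e u p, last u p = v & size p = k].

Definition dist_le (T : finType) (e : rel T) (u v : T) (k : nat) : Prop :=
  exists2 j, j <= k & walk_of_length e u v j.

Definition diameter_is (T : finType) (e : rel T) (D : nat) : Prop :=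
  (forall u v : T, dist_le e u v D) /\
  (exists u v : T, forall j, j < D -> ~ walk_of_length e u v j).

Definition digraph_iso (T1 T2 : finType) (e1 : rel T1) (e2 : rel T2) : Prop :=
  exists f : T1 -> T2, bijective f /\ forall x y, e2 (f x) (f y) = e1 x y.

Definition vertex_transitive (T : finType) (e : rel T) : Prop :=
  forall u v : T, exists f : T -> T,
    [/\ bijective f, (forall x y, e (f x) (f y) = e x y) & f u = v].

Definition line_vertex (T : finType) (e : rel T) : finType :=
  {p : T * T | e p.1 p.2}.
Definition line_arc (T : finType) (e : rel T) : rel (line_vertex e) :=
  fun a b => (val a).2 == (val b).1.

(* arcs traversed by a closed walk given as a cycle c = [:: x0; ...; x_{m-1}] *)
Definition cycle_arcs (T : finType) (c : seq T) : seq (T * T) := zip c (rot 1 c).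

Definition eulerian (T : finType) (e : rel T) : Prop :=
  exists c : seq T, [/\ cycle e c, uniq (cycle_arcs c) &
                        forall x y, e x y -> (x, y) \in cycle_arcs c].

Definition hamiltonian (T : finType) (e : rel T) : Prop :=
  exists c : seq T, [/\ cycle e c, uniq c & forall v : T, v \in c].

(* ---------- Kautz-type digraphs; the alphabet Z_{d+1} is 'I_d.+1 ---------- *)

Definition KV2 (d : nat) : finType := {x : 'I_d.+1 * 'I_d.+1 | x.1 != x.2}.

Definition K2arc (d : nat) : rel (KV2 d) :=
  fun u v => ((val u).2 == (val v).1) && ((val v).2 != (val u).2).

Definition sK2arc (d : nat) : rel (KV2 d) :=
  fun u v => [&& (val u).2 == (val v).1, (val v).2 != (val u).1 & (val v).2 != (val u).2].

Definition K2arc_in_digon (d : nat) (u v : KV2 d) : bool :=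
  [&& K2arc u v, K2arc v u & u != v].

Definition CKV3 (d : nat) : finType :=
  {x : 'I_d.+1 * 'I_d.+1 * 'I_d.+1 | [&& x.1.1 != x.1.2, x.1.2 != x.2 & x.2 != x.1.1]}.

Definition CK3arc (d : nat) : rel (CKV3 d) :=
  fun u v => [&& (val v).1.1 == (val u).1.2, (val v).1.2 == (val u).2,
                 (val v).2 != (val u).1.2 & (val v).2 != (val u).2].

(* A word x1x2x3 of CK(d,3) has the d-1 successors x2x3y (y <> x2, x3) and d-1
   predecessors, and is the same thing as the arc x1x2 -> x2x3 of sK(d,2); this
   gives regularity, the counts and the line-digraph isomorphism.  Any word reaches
   any other in at most five steps by inserting fresh letters, while x0x1x2 needs
   five to reach x2x1x0.  Permutations of the alphabet act transitively on words.
   Both CK(d,3) and sK(d,2) are regular and strongly connected, hence Eulerian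
   (Hierholzer: splice closed trails until every arc is used); an Euler circuit of
   sK(d,2) is a Hamiltonian cycle of L(sK(d,2)), which is isomorphic to CK(d,3). *)

(* Imported before all_boot so that [cycle] means path.cycle, not a cyclic group. *)
From mathcomp Require Import fingroup perm.
From mathcomp Require Import all_boot zify.
Set Implicit Arguments. Unset Strict Implicit. Unset Printing Implicit Defensive.

Section DigraphFacts.
Variables (T : finType) (e : rel T).

Lemma num_arcs_sum_outdeg : num_arcs e = \sum_(u : T) outdeg e u.
Proof.
rewrite /num_arcs -sum1_card.
transitivity (\sum_(u : T) \sum_(w : T | e u w) 1).
  by rewrite pair_big_dep; apply: eq_bigl => p; rewrite inE.
by apply: eq_bigr => u _; rewrite sum1_card /outdeg; apply: eq_card => w; rewrite inE.
Qed.

Lemma num_arcs_regular k : regular_digraph e k -> num_arcs e = #|T| * k.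
Proof.
move=> reg; rewrite num_arcs_sum_outdeg (eq_bigr (fun _ => k)) ?sum_nat_const //.
by move=> u _; case: (reg u).
Qed.

Lemma regular_outdeg_indeg k : regular_digraph e k -> forall v, outdeg e v = indeg e v.
Proof. by move=> reg v; case: (reg v) => -> ->. Qed.

Lemma cycle_arcs_chain (c : seq T) : cycle (fun a b : T * T => a.2 == b.1) (cycle_arcs c).
Proof.
case: c => [|x [|y s]] //; rewrite /cycle_arcs rot1_cons /=; first by rewrite eqxx.
have chain (w u z t : T) s' : path (fun a b : T * T => a.2 == b.1) (w, u)
    (rcons (zip (u :: s') (rcons s' z)) (z, t)).
  by elim: s' w u => [|v s' IH] w u /=; rewrite !eqxx ?IH.
exact: chain.
Qed.

End DigraphFacts.

Section Euler.
Variables (T : finType) (e : rel T).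

Definition walk_arcs (v : T) (p : seq T) : seq (T * T) := zip (v :: p) p.

Definition closed_trail (v : T) (p : seq T) : bool :=
  [&& path e v p, last v p == v & uniq (walk_arcs v p)].

Definition balanced (U : pred (T * T)) : Prop := forall w,
  #|[pred a | U a && (a.1 == w)]| = #|[pred a | U a && (a.2 == w)]|.

Lemma walk_arcs_cons v x p : walk_arcs v (x :: p) = (v, x) :: walk_arcs x p.
Proof. by []. Qed.

Lemma size_walk_arcs v p : size (walk_arcs v p) = size p.
Proof. by elim: p v => [|x p IH] v //; rewrite walk_arcs_cons /= IH. Qed.

Lemma walk_arcs_cat v p1 p2 :
  walk_arcs v (p1 ++ p2) = walk_arcs v p1 ++ walk_arcs (last v p1) p2.
Proof. by elim: p1 v => [|x p1 IH] v //; rewrite cat_cons !walk_arcs_cons IH. Qed.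

Lemma walk_arcs_rcons v p y :
  walk_arcs v (rcons p y) = rcons (walk_arcs v p) (last v p, y).
Proof. by rewrite -cats1 walk_arcs_cat cats1. Qed.

Lemma count_walk_arcs v p w :
  count (fun a => a.1 == w) (walk_arcs v p) + (last v p == w)
  = count (fun a => a.2 == w) (walk_arcs v p) + (v == w).
Proof. by elim: p v => [|x p IH] v //; rewrite walk_arcs_cons /= -addnA IH /=; lia. Qed.

Lemma mem_walk_arcs v p a : a \in walk_arcs v p -> (a.1 \in v :: p) && (a.2 \in p).
Proof.
elim: p v => [|x p IH] v //; rewrite walk_arcs_cons in_cons => /orP [/eqP -> | /IH].
  by rewrite /= !in_cons !eqxx ?orbT.
by case/andP; rewrite !in_cons => -> ->; rewrite !orbT.
Qed.

Lemma path_walk_arcs v p a : path e v p -> a \in walk_arcs v p -> e a.1 a.2.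
Proof.
elim: p v => [|x p IH] v //= /andP [evx hp]; rewrite walk_arcs_cons in_cons.
by case/orP => [/eqP -> // | ]; apply: IH.
Qed.

Lemma count_uniq_card (S : finType) (s : seq S) (P : pred S) :
  uniq s -> count P s = #|[pred a | (a \in s) && P a]|.
Proof.
move=> us; rewrite -size_filter; move/card_uniqP: (filter_uniq P us) => <-.
by apply: eq_card => a; rewrite !inE mem_filter andbC.
Qed.

Lemma uniq_size_le_card (S : finType) (s : seq S) (U : pred S) :
  uniq s -> all U s -> size s <= #|U|.
Proof.
move=> /card_uniqP <- /allP sU.
by apply/subset_leq_card/subsetP.
Qed.

Section Trail.
Variable U : pred (T * T).
Hypotheses (balU : balanced U) (UE : forall a, U a -> e a.1 a.2).

(* The end of an open trail has received one more arc of U than it has used,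
   so by balance one of its outgoing arcs in U is still free. *)
Lemma open_trail_extends v p y0 : U (v, y0) -> path e v p ->
  uniq (walk_arcs v p) -> all U (walk_arcs v p) -> ~~ ((p != [::]) && (last v p == v)) ->
  exists2 y, U (last v p, y) & (last v p, y) \notin walk_arcs v p.
Proof.
move=> Uy0; case: p => [|x p]; first by exists y0.
set w := last v _ => _ up aU wv; rewrite /= in wv.
apply/exists_inP; apply: contraT => /exists_inPn unused.
have outU : #|[pred a | U a && (a.1 == w)]| <= count (fun a => a.1 == w) (walk_arcs v (x :: p)).
  rewrite (count_uniq_card _ up); apply/subset_leq_card/subsetP => -[a b].
  rewrite inE /= => /andP [Uab /eqP Ea]; subst a.
  by rewrite inE /= eqxx andbT; apply: negbNE; apply: unused.
have inU : count (fun a => a.2 == w) (walk_arcs v (x :: p)) <= #|[pred a | U a && (a.2 == w)]|.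
  rewrite (count_uniq_card _ up); apply/subset_leq_card/subsetP => a.
  by rewrite !inE => /andP [ain ->]; rewrite (allP aU a ain).
have := count_walk_arcs v (x :: p) w; rewrite -/w eqxx eq_sym (negbTE wv).
have := balU w; lia.
Qed.

Lemma closed_trail_in_balanced v y0 : U (v, y0) ->
  exists2 q, q != [::] & closed_trail v q && all U (walk_arcs v q).
Proof.
move=> Uy0.
suff: forall k p, #|U| - size p < k -> path e v p -> uniq (walk_arcs v p) ->
    all U (walk_arcs v p) -> exists2 q, q != [::] & closed_trail v q && all U (walk_arcs v q).
  by move=> H; apply: (H #|U|.+1 [::]); rewrite ?subn0.
elim=> [//|k IH] p hk hp up aU.
have [/andP [pn lv] | open] := boolP ((p != [::]) && (last v p == v)).
  by exists p; rewrite // /closed_trail hp lv up.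
have [y Uy ny] := open_trail_extends Uy0 hp up aU open.
have aU' : all U (walk_arcs v (rcons p y)) by rewrite walk_arcs_rcons all_rcons Uy.
have up' : uniq (walk_arcs v (rcons p y)) by rewrite walk_arcs_rcons rcons_uniq ny up.
apply: (IH (rcons p y)) => //; last by rewrite rcons_path hp (UE Uy).
have := uniq_size_le_card up' aU'; rewrite size_walk_arcs size_rcons => lt_pU.
by rewrite subnS -ltnS prednK // subn_gt0.
Qed.

End Trail.

Definition arcs : pred (T * T) := [pred a | e a.1 a.2].

Lemma card_out_arcs w : #|[pred a | arcs a && (a.1 == w)]| = outdeg e w.
Proof.
have inj : injective (fun y : T => (w, y)) by move=> y1 y2 /(congr1 snd).
rewrite /outdeg -(card_imset _ inj); apply: eq_card => -[a b]; rewrite inE /arcs /=.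
apply/andP/imsetP => [[eab /eqP Ea] | [y]]; first by subst a; exists b; rewrite ?inE.
by rewrite inE => ewy [-> ->].
Qed.

Lemma card_in_arcs w : #|[pred a | arcs a && (a.2 == w)]| = indeg e w.
Proof.
have inj : injective (fun y : T => (y, w)) by move=> y1 y2 /(congr1 fst).
rewrite /indeg -(card_imset _ inj); apply: eq_card => -[a b]; rewrite inE /arcs /=.
apply/andP/imsetP => [[eab /eqP Eb] | [y]]; first by subst b; exists a; rewrite ?inE.
by rewrite inE => ewy [-> ->].
Qed.

Lemma balanced_arcs : (forall v, outdeg e v = indeg e v) -> balanced arcs.
Proof. by move=> deg w; rewrite card_out_arcs card_in_arcs. Qed.

Lemma balanced_unused v p : balanced arcs -> closed_trail v p ->
  balanced [pred a | arcs a && (a \notin walk_arcs v p)].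
Proof.
move=> bal /and3P [hp /eqP lv up] w.
have split_card (P : pred (T * T)) : #|[pred a | arcs a && P a]| =
    #|[pred a | arcs a && (a \notin walk_arcs v p) && P a]| + count P (walk_arcs v p).
  rewrite (count_uniq_card _ up) -(cardID (mem (walk_arcs v p)) [pred a | arcs a && P a]).
  rewrite addnC; congr (_ + _); apply: eq_card => a; rewrite !inE.
    by case: (a \in _); rewrite ?andbT ?andbF.
  by case ain: (a \in _); rewrite ?andbT ?andbF //= (path_walk_arcs hp ain : arcs a).
have := bal w; rewrite !split_card; have := count_walk_arcs v p w; rewrite lv.
move=> /eqP; rewrite eqn_add2r => /eqP ->; exact: addIn.
Qed.

Lemma connect_forward_closed (S : pred T) x y :
  (forall u w, u \in S -> e u w -> w \in S) -> x \in S -> connect e x y -> y \in S.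
Proof.
move=> clS xS /connectP [q hq ->]; elim: q x xS hq => [|z q IH] x //= xS /andP [exz].
exact: IH (clS _ _ xS exz).
Qed.

Lemma unused_arc_on_closed_trail v p x y : (forall u w, connect e u w) ->
  e x y -> (x, y) \notin walk_arcs v p ->
  exists v' y', [/\ v' \in v :: p, e v' y' & (v', y') \notin walk_arcs v p].
Proof.
move=> conn exy nxy.
suff /existsP [v' /andP [v'S /existsP [y' /andP [ev'y' nv'y']]]] :
    [exists v', (v' \in v :: p) && [exists y', e v' y' && ((v', y') \notin walk_arcs v p)]].
  by exists v', y'.
apply: contraT; rewrite negb_exists => /forallP all_used.
have used u w : u \in v :: p -> e u w -> (u, w) \in walk_arcs v p.
  move=> uS euw; have := all_used u; rewrite uS negb_exists => /forallP /(_ w).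
  by rewrite euw negbK.
have clS u w : u \in v :: p -> e u w -> w \in v :: p.
  by move=> uS /(used _ _ uS) /mem_walk_arcs /andP [_ wp]; rewrite in_cons wp orbT.
have xS : x \in v :: p by apply: connect_forward_closed clS (mem_head v p) (conn v x).
by rewrite (used _ _ xS exy) in nxy.
Qed.

Lemma rotate_closed_trail v p v' : closed_trail v p -> v' \in v :: p ->
  exists2 p', closed_trail v' p' & perm_eq (walk_arcs v p) (walk_arcs v' p').
Proof.
move=> cp v'S; move: cp; case/splitPl: v'S => p1 p2 <- /and3P [].
rewrite cat_path last_cat => /andP [hp1 hp2] /eqP lv up.
have pe : perm_eq (walk_arcs v (p1 ++ p2)) (walk_arcs (last v p1) (p2 ++ p1)).
  by rewrite !walk_arcs_cat lv perm_catC.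
exists (p2 ++ p1) => //.
by rewrite /closed_trail cat_path last_cat lv hp1 hp2 eqxx -(perm_uniq pe) up.
Qed.

Lemma cat_closed_trail v p q : closed_trail v p -> closed_trail v q ->
  ~~ has (mem (walk_arcs v p)) (walk_arcs v q) -> closed_trail v (p ++ q).
Proof.
case/and3P => hp /eqP lp up /and3P [hq lq uq] disj.
by rewrite /closed_trail cat_path last_cat walk_arcs_cat cat_uniq lp hp hq lq up uq disj.
Qed.

Lemma longer_closed_trail v p x y : balanced arcs -> (forall u w, connect e u w) ->
  closed_trail v p -> e x y -> (x, y) \notin walk_arcs v p ->
  exists v' q, closed_trail v' q && (size p < size q).
Proof.
move=> bal conn cp exy nxy.
have [v' [y' [v'S ev'y' nv'y']]] := unused_arc_on_closed_trail conn exy nxy.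
have [p' cp' pe] := rotate_closed_trail cp v'S.
have Uv'y' : [pred a | arcs a && (a \notin walk_arcs v' p')] (v', y').
  by rewrite inE /= -(perm_mem pe) nv'y' andbT.
have unused_arcs : forall a, [pred a | arcs a && (a \notin walk_arcs v' p')] a -> e a.1 a.2.
  by move=> a /andP [].
have [q qn /andP [cq unused]] :=
  closed_trail_in_balanced (balanced_unused bal cp') unused_arcs Uv'y'.
exists v', (p' ++ q); rewrite cat_closed_trail //; last first.
  by apply/hasPn => a /(allP unused) /andP [].
rewrite size_cat -(size_walk_arcs v) (perm_size pe) size_walk_arcs.
by case: q qn {cq unused} => // z q _; rewrite /= addnS ltnS leq_addr.
Qed.

Lemma zip_belast v q : zip (belast v q) q = walk_arcs v q.
Proof. by elim: q v => [|x q IH] v //=; rewrite IH. Qed.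

Lemma closed_trail_cycle v p : closed_trail v p ->
  cycle e (belast v p) /\ cycle_arcs (belast v p) = walk_arcs v p.
Proof.
case: p => [|x p] /and3P [hp /eqP lv _] //=; rewrite /cycle_arcs rot1_cons.
have E : rcons (belast x p) v = x :: p by rewrite -lv -lastI.
by rewrite /= E -(zip_belast v (x :: p)).
Qed.

Theorem eulerian_of_balanced_connected :
  (forall v, outdeg e v = indeg e v) -> (forall u w, connect e u w) -> eulerian e.
Proof.
move=> deg conn; have bal := balanced_arcs deg.
case: (pickP T) => [v0 _ | noT]; last by exists [::]; split=> // x; have := noT x.
suff: forall k v p, #|arcs| - size p < k -> closed_trail v p -> eulerian e.
  by move=> H; apply: (H #|arcs|.+1 v0 [::]); rewrite ?subn0 // /closed_trail /= eqxx.
elim=> [//|k IH] v p hk cp.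
have [cover | /forallPn [[x y]]] := boolP [forall a, arcs a ==> (a \in walk_arcs v p)].
  have [cyc arcs_c] := closed_trail_cycle cp; exists (belast v p); split=> //.
    by rewrite arcs_c; case/and3P: cp.
  by move=> x y exy; rewrite arcs_c; apply: (implyP (forallP cover (x, y))).
rewrite negb_imply => /andP [exy nxy].
have [v' [q /andP [cq ltpq]]] := longer_closed_trail bal conn cp exy nxy.
case/and3P: (cq) => hq _ uq; apply: (IH v' q _ cq).
have arcs_q : all arcs (walk_arcs v' q) by apply/allP => a; apply: path_walk_arcs hq.
have := uniq_size_le_card uq arcs_q; rewrite size_walk_arcs => le_qE.
exact: leq_trans (ltn_sub2l (leq_trans ltpq le_qE) ltpq) hk.
Qed.

End Euler.

Lemma hamiltonian_line_of_eulerian (T : finType) (e : rel T) :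
  eulerian e -> hamiltonian (@line_arc T e).
Proof.
case=> c [cyc uc cov].
have arcs_c : all (fun a => e a.1 a.2) (cycle_arcs c).
  case: c cyc {uc cov} => [|x s] //= cyc; apply/allP => a.
  rewrite /cycle_arcs rot1_cons -(belast_rcons x s x) zip_belast.
  exact: path_walk_arcs cyc.
pose h : seq (line_vertex e) := pmap insub (cycle_arcs c).
have val_h : map val h = cycle_arcs c.
  by rewrite /h (pmap_filter (insubK _)) (eq_filter (isSome_insub _)); exact/all_filterP.
exists h; split.
- have -> : @line_arc T e = relpre val (fun a b : T * T => a.2 == b.1) by [].
  by rewrite -cycle_map val_h cycle_arcs_chain.
- exact: pmap_sub_uniq.
- by move=> [[x y] /= exy]; rewrite mem_pmap_sub /=; apply: cov.
Qed.

Lemma hamiltonian_iso (T1 T2 : finType) (e1 : rel T1) (e2 : rel T2) :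
  digraph_iso e1 e2 -> hamiltonian e2 -> hamiltonian e1.
Proof.
case=> f [[g fK gK] fe] [c [cyc uc cov]]; exists (map g c); split.
- by rewrite cycle_map; apply: etrans cyc; apply: eq_cycle => x y /=; rewrite -fe !gK.
- by rewrite map_inj_uniq //; apply: can_inj gK.
- by move=> v; rewrite -(fK v) map_f.
Qed.

Lemma fresh_letter n (s : seq 'I_n) : size s < n -> exists x : 'I_n, x \notin s.
Proof.
move=> lt_sn; apply/existsP; apply: contraLR lt_sn => /existsPn all_in.
rewrite -leqNgt -{1}(card_ord n); apply: leq_trans (card_size s).
by apply/subset_leq_card/subsetP => x _; have := all_in x; rewrite negbK.
Qed.

Ltac distinct := rewrite ?unfold_in /=; repeat (apply/andP; split); by [|rewrite eq_sym].

Section Kautz.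
Variable d : nat.

Lemma card_avoid2 (b c : 'I_d.+1) : b != c -> #|[set y | (y != b) && (y != c)]| = d - 1.
Proof.
move=> bc; have := cardsC [set b; c]; rewrite cards2 bc card_ord.
have -> : ~: [set b; c] = [set y | (y != b) && (y != c)].
  by apply/setP => y; rewrite !inE negb_or.
lia.
Qed.

Lemma outdeg_CK3 (u : CKV3 d) : outdeg (@CK3arc d) u = d - 1.
Proof.
(* [insubd u w] is the vertex with word [w]; [u] is only the default for non-words. *)
case: u => -[[a b] c] /= h; have /and3P [ab bc ca] := h; set u : CKV3 d := exist _ (a, b, c) h.
rewrite /outdeg -(card_avoid2 bc) -(card_in_imset (f := fun y => insubd u (b, c, y))).
  apply: eq_card => -[[[x y] z] hw]; rewrite !inE /CK3arc /=.
  apply/idP/imsetP => [/and4P [/eqP Ex /eqP Ey zb zc] | [t]].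
    by subst x y; exists z; rewrite ?inE ?zb //; apply: val_inj; rewrite insubdK.
  rewrite inE => /andP [tb tc] /(congr1 val); rewrite insubdK /=; last by distinct.
  by case=> -> -> ->; rewrite !eqxx tb tc.
move=> y1 y2; rewrite !inE => /andP [y1b y1c] /andP [y2b y2c] /(congr1 val).
by rewrite !insubdK /=; [case | distinct | distinct].
Qed.

Lemma indeg_CK3 (u : CKV3 d) : indeg (@CK3arc d) u = d - 1.
Proof.
case: u => -[[a b] c] /= h; have /and3P [ab bc ca] := h; set u : CKV3 d := exist _ (a, b, c) h.
rewrite /indeg -(card_avoid2 ab) -(card_in_imset (f := fun y => insubd u (y, a, b))).
  apply: eq_card => -[[[x y] z] hw]; rewrite !inE /CK3arc /=.
  apply/idP/imsetP => [/and4P [/eqP Ey /eqP Ez _ _] | [t]].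
    subst y z; exists x; last by apply: val_inj; rewrite insubdK.
    by rewrite inE; case/and3P: hw => -> _; rewrite eq_sym.
  rewrite inE => /andP [ta tb] /(congr1 val); rewrite insubdK /=; last by distinct.
  by case=> _ -> ->; rewrite !eqxx /=; distinct.
move=> y1 y2; rewrite !inE => /andP [y1a y1b] /andP [y2a y2b] /(congr1 val).
by rewrite !insubdK /=; [case | distinct | distinct].
Qed.

Lemma outdeg_sK2 (u : KV2 d) : outdeg (@sK2arc d) u = d - 1.
Proof.
case: u => -[a b] /= ab; set u : KV2 d := exist _ (a, b) ab.
rewrite /outdeg -(card_avoid2 ab) -(card_in_imset (f := fun y => insubd u (b, y))).
  apply: eq_card => -[[x y] hw]; rewrite !inE /sK2arc /=.
  apply/idP/imsetP => [/and3P [/eqP Ex ya yb] | [t]].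
    by subst x; exists y; rewrite ?inE ?ya //; apply: val_inj; rewrite insubdK.
  rewrite inE => /andP [ta tb] /(congr1 val); rewrite insubdK /=; last by distinct.
  by case=> -> ->; rewrite eqxx ta tb.
move=> y1 y2; rewrite !inE => /andP [y1a y1b] /andP [y2a y2b] /(congr1 val).
by rewrite !insubdK /=; [case | distinct | distinct].
Qed.

Lemma indeg_sK2 (u : KV2 d) : indeg (@sK2arc d) u = d - 1.
Proof.
case: u => -[a b] /= ab; set u : KV2 d := exist _ (a, b) ab.
rewrite /indeg -(card_avoid2 ab) -(card_in_imset (f := fun y => insubd u (y, a))).
  apply: eq_card => -[[x y] hw]; rewrite !inE /sK2arc /=.
  apply/idP/imsetP => [/and3P [/eqP Ey bx by_] | [t]].
    subst y; exists x; last by apply: val_inj; rewrite insubdK.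
    by rewrite inE hw eq_sym bx.
  rewrite inE => /andP [ta tb] /(congr1 val); rewrite insubdK /=; last by distinct.
  by case=> -> ->; rewrite eqxx /=; distinct.
move=> y1 y2; rewrite !inE => /andP [y1a y1b] /andP [y2a y2b] /(congr1 val).
by rewrite !insubdK /=; [case | distinct | distinct].
Qed.

Lemma CK3_regular : regular_digraph (@CK3arc d) (d - 1).
Proof. by move=> u; rewrite outdeg_CK3 indeg_CK3. Qed.

Lemma sK2_regular : regular_digraph (@sK2arc d) (d - 1).
Proof. by move=> u; rewrite outdeg_sK2 indeg_sK2. Qed.

Lemma card_KV2 : #|KV2 d| = d.+1 * d.
Proof.
rewrite card_sig -sum1_card.
transitivity (\sum_(a : 'I_d.+1) \sum_(b : 'I_d.+1 | a != b) 1).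
  by rewrite pair_big_dep; apply: eq_bigl => p.
rewrite (eq_bigr (fun _ => d)) ?sum_nat_const ?card_ord // => a _.
rewrite sum1_card; have := cardsC [set a]; rewrite cards1 card_ord.
rewrite add1n (eq_card (B := [pred b | a != b])) => [/succn_inj // | b].
by rewrite !inE eq_sym.
Qed.

Lemma card_CKV3 : #|CKV3 d| = d.+1 * d * (d - 1).
Proof.
rewrite card_sig -sum1_card.
transitivity (\sum_(x : 'I_d.+1 * 'I_d.+1 | x.1 != x.2)
                 \sum_(c : 'I_d.+1 | (x.2 != c) && (c != x.1)) 1).
  by rewrite pair_big_dep; apply: eq_bigl => p.
rewrite (eq_bigr (fun _ => d - 1)) => [|[a b] /= ab].
  by rewrite sum_nat_const -card_KV2 card_sig.
rewrite sum1_card -(card_avoid2 ab).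
by apply: eq_card => c; rewrite !inE unfold_in /= (eq_sym b) andbC.
Qed.

Lemma CK3_dist_le5 (hd : 3 <= d) (u v : CKV3 d) : dist_le (@CK3arc d) u v 5.
Proof.
case: v => -[[p q] r] hv; have /and3P [pq qr rp] := hv; set v : CKV3 d := exist _ (p, q, r) hv.
case: u => -[[a b] c] hu; have /and3P [ab bc ca] := hu; set u : CKV3 d := exist _ (a, b, c) hu.
have v_eq : insubd u (p, q, r) = v by apply: val_inj; rewrite insubdK.
have [z4] := @fresh_letter d.+1 [:: b; c; p] (leq_ltn_trans hd (ltnSn _)).
rewrite !inE !negb_or => /and3P [z4b z4c z4p].
have [/existsP [z5] | full] := boolP [exists z5, z5 \notin [:: c; z4; p; q]].
  rewrite !inE !negb_or => /and4P [z5c z5z4 z5p z5q].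
  exists 5 => //; exists [:: insubd u (b, c, z4); insubd u (c, z4, z5);
    insubd u (z4, z5, p); insubd u (z5, p, q); insubd u (p, q, r)].
  by split => //=; rewrite v_eq /CK3arc !insubdK /=; distinct.
have all4 x : x \in [:: c; z4; p; q] by apply: contraT => nx; case/existsP: full; exists x.
(* Only four letters are left, so d = 3; then b is p or q, and the route is shorter. *)
have no3 (x y z : 'I_d.+1) : ~ (forall w, w \in [:: x; y; z]).
  by move=> cover; have [w] := @fresh_letter d.+1 [:: x; y; z] hd; rewrite cover.
have := all4 b; rewrite !inE (negbTE bc) eq_sym (negbTE z4b) /= => /orP [/eqP Eb | /eqP Eb].
  have qz4 : q != z4.
    apply/negP => /eqP Eq; apply: (no3 c z4 p) => w.
    by have := all4 w; rewrite Eq !inE; case: (w == c); case: (w == z4); case: (w == p).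
  subst b; exists 4 => //; exists [:: insubd u (p, c, z4); insubd u (c, z4, p);
    insubd u (z4, p, q); insubd u (p, q, r)].
  by split => //=; rewrite v_eq /CK3arc !insubdK /=; distinct.
have pc : p != c.
  apply/negP => /eqP Ep; apply: (no3 c z4 q) => w.
  by have := all4 w; rewrite Ep !inE; case: (w == c); case: (w == z4); case: (w == q).
subst b; exists 3 => //; exists [:: insubd u (q, c, p); insubd u (c, p, q); insubd u (p, q, r)].
by split => //=; rewrite v_eq /CK3arc !insubdK /=; distinct.
Qed.

Lemma CK3_antipodal (x0 x1 x2 : 'I_d.+1) hX hY j : j < 5 ->
  ~ walk_of_length (@CK3arc d) (exist _ (x0, x1, x2) hX) (exist _ (x2, x1, x0) hY) j.
Proof.
(* The letters of a short walk are forced by the endpoints, and some letter then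
   repeats inside a window of three. *)
move=> lt_j5 [p [hp /(congr1 val) lp sp]].
have {lt_j5 sp} : size p < 5 by rewrite sp.
case: p hp lp => [|[[[? ?] ?] ?] [|[[[? ?] ?] ?] [|[[[? ?] ?] ?] [|[[[? ?] ?] ?] [|? ?]]]]] //=;
  rewrite /CK3arc /= => hp [] *; simpl in *;
  repeat match goal with
  | H : is_true (_ && _) |- _ => case/andP: H => ? ?
  | H : is_true (_ == _) |- _ => move/eqP: H => ?; subst
  | H : _ = _ |- _ => subst
  end;
  by match goal with H : is_true (?x != ?x) |- _ => rewrite eqxx in H end.
Qed.

Lemma CKV3_neq12 (x : CKV3 d) : (val x).1.1 != (val x).1.2.
Proof. by case/and3P: (valP x). Qed.

Lemma CKV3_neq23 (x : CKV3 d) : (val x).1.2 != (val x).2.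
Proof. by case/and3P: (valP x). Qed.

Definition ck_prefix (x : CKV3 d) : KV2 d := exist _ ((val x).1.1, (val x).1.2) (CKV3_neq12 x).
Definition ck_suffix (x : CKV3 d) : KV2 d := exist _ ((val x).1.2, (val x).2) (CKV3_neq23 x).

Lemma sK2arc_prefix_suffix (x : CKV3 d) : sK2arc (ck_prefix x) (ck_suffix x).
Proof.
by case: x => -[[a b] c] h; have /and3P [ab bc ca] := h; rewrite /sK2arc /=; distinct.
Qed.

Lemma sK2arc_suffix : {homo ck_suffix : x y / CK3arc x y >-> sK2arc x y}.
Proof.
move=> -[[[a b] c] hx] [[[a' b'] c'] hy]; rewrite /CK3arc /sK2arc /=.
by case/and4P => _ /eqP -> c'b c'c; rewrite eqxx c'b c'c.
Qed.

Definition ck_line (x : CKV3 d) : line_vertex (@sK2arc d) :=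
  exist _ (ck_prefix x, ck_suffix x) (sK2arc_prefix_suffix x).

Definition line_word_letters (l : line_vertex (@sK2arc d)) : 'I_d.+1 * 'I_d.+1 * 'I_d.+1 :=
  ((val (val l).1).1, (val (val l).1).2, (val (val l).2).2).

Lemma line_word_distinct (l : line_vertex (@sK2arc d)) :
  let: (a, b, c) := line_word_letters l in [&& a != b, b != c & c != a].
Proof.
case: l => -[[[a b] ab] [[b' c] b'c]]; rewrite /sK2arc /= => /and3P [/eqP Eb ca cb].
by subst b'; rewrite ab ca eq_sym cb.
Qed.

Definition line_word (l : line_vertex (@sK2arc d)) : CKV3 d :=
  exist _ (line_word_letters l) (line_word_distinct l).

Lemma CK3_line_iso : digraph_iso (@CK3arc d) (@line_arc (KV2 d) (@sK2arc d)).
Proof.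
exists ck_line; split.
  exists line_word => [[[[a b] c] h] | ]; first exact: val_inj.
  case=> -[[[a b] ab] [[b' c] b'c]] h; have /and3P [/= /eqP Eb _ _] := h; subst b'.
  apply: val_inj => /=; congr pair; exact: val_inj.
move=> [[[a b] c] hx] [[[a' b'] c'] hy]; have /and3P [_ /= b'c' c'a'] := hy.
rewrite /line_arc /CK3arc /= -(inj_eq val_inj) /= xpair_eqE (eq_sym b a') (eq_sym c b').
by case: eqP => //= <-; case: eqP => //= <-; rewrite c'a' eq_sym b'c'.
Qed.

Lemma sK2arc_K2arc_digon (u v : KV2 d) : sK2arc u v = K2arc u v && ~~ K2arc_in_digon u v.
Proof.
case: u v => -[a b] ab [[b' c] b'c]; rewrite /K2arc_in_digon /sK2arc /K2arc /=.
case: (b =P b') => //= Eb; subst b'.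
case: (c =P a) => [ca | _] /=; last by case: (c == b).
subst c; have ab_ba : exist _ (a, b) ab != exist _ (b, a) b'c :> KV2 d.
  by rewrite -(inj_eq val_inj) /= xpair_eqE (negbTE ab).
by rewrite ab eq_sym ab ab_ba.
Qed.

Lemma perm_distinct3 (a b c p q r : 'I_d.+1) :
  [&& a != b, b != c & c != a] -> [&& p != q, q != r & r != p] ->
  exists s : {perm 'I_d.+1}, [/\ s a = p, s b = q & s c = r].
Proof.
move=> /and3P [ab bc ca] /and3P [pq qr rp].
pose t1 := tperm a p; pose t2 := tperm (t1 b) q; pose t3 := tperm (t2 (t1 c)) r.
have t1b_p : t1 b != p by rewrite -(tpermL a p) (inj_eq perm_inj) eq_sym.
have t2p : t2 p = p by rewrite tpermD // eq_sym.
have t12c_p : t2 (t1 c) != p by rewrite -t2p -(tpermL a p) !(inj_eq perm_inj).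
have t12c_q : t2 (t1 c) != q by rewrite -(tpermL (t1 b) q) !(inj_eq perm_inj) eq_sym.
exists (t1 * t2 * t3)%g; rewrite !permM; split.
- by rewrite tpermL t2p tpermD // eq_sym.
- by rewrite tpermL tpermD // eq_sym.
- by rewrite tpermL.
Qed.

Definition relabel (s : {perm 'I_d.+1}) (x : CKV3 d) : CKV3 d :=
  insubd x (s (val x).1.1, s (val x).1.2, s (val x).2).

Lemma val_relabel s (x : CKV3 d) :
  val (relabel s x) = (s (val x).1.1, s (val x).1.2, s (val x).2).
Proof. by rewrite insubdK // unfold_in /= !(inj_eq perm_inj); case/and3P: (valP x) => -> -> ->. Qed.

Lemma CK3_vertex_transitive : vertex_transitive (@CK3arc d).
Proof.
move=> u v; have [s [su1 su2 su3]] := perm_distinct3 (valP u) (valP v).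
exists (relabel s); split.
- by exists (relabel s^-1) => x; apply: val_inj; rewrite !val_relabel /= ?permK ?permKV;
    case: (val x) => -[].
- by move=> x y; rewrite /CK3arc !val_relabel /= !(inj_eq perm_inj).
- by apply: val_inj; rewrite val_relabel su1 su2 su3; case: (val v) => -[].
Qed.

Lemma CK3_connected (hd : 3 <= d) (u v : CKV3 d) : connect (@CK3arc d) u v.
Proof. by have [j _ [p [hp <- _]]] := CK3_dist_le5 hd u v; apply/connectP; exists p. Qed.

Lemma ck_suffix_onto (hd : 2 <= d) (w : KV2 d) : exists x, ck_suffix x = w.
Proof.
case: w => -[p q] pq; have [y] := @fresh_letter d.+1 [:: p; q] hd.
rewrite !inE negb_or => /andP [yp yq].
have h : [&& y != p, p != q & q != y] by rewrite yp pq eq_sym yq.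
by exists (exist _ (y, p, q) h); apply: val_inj.
Qed.

Lemma sK2_connected (hd : 3 <= d) (u v : KV2 d) : connect (@sK2arc d) u v.
Proof.
have [[x <-] [y <-]] := (ck_suffix_onto (ltnW hd) u, ck_suffix_onto (ltnW hd) v).
have /connectP [p hp ->] := CK3_connected hd x y.
apply/connectP; exists (map ck_suffix p); first exact: homo_path sK2arc_suffix hp.
by rewrite last_map.
Qed.

Lemma three_letters (hd : 2 <= d) :
  exists x0 x1 x2 : 'I_d.+1, [&& x0 != x1, x1 != x2 & x2 != x0].
Proof.
exists (inord 0), (inord 1), (inord 2).
by rewrite -!(inj_eq val_inj) /= !inordK //; lia.
Qed.

Lemma CK3_diameter (hd : 3 <= d) : diameter_is (@CK3arc d) 5.
Proof.
split=> [u v | ]; first exact: CK3_dist_le5.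
have [x0 [x1 [x2 hX]]] := three_letters (ltnW hd).
have hY : [&& x2 != x1, x1 != x0 & x0 != x2].
  by case/and3P: hX => ? ? ?; distinct.
by exists (exist _ (x0, x1, x2) hX), (exist _ (x2, x1, x0) hY); apply: CK3_antipodal.
Qed.

Lemma CK3_num_arcs : num_arcs (@CK3arc d) = d.+1 * d * (d - 1) ^ 2.
Proof. by rewrite (num_arcs_regular CK3_regular) card_CKV3 -mulnA mulnn. Qed.

Lemma CK3_eulerian (hd : 3 <= d) : eulerian (@CK3arc d).
Proof.
exact: eulerian_of_balanced_connected (regular_outdeg_indeg CK3_regular) (CK3_connected hd).
Qed.

Lemma CK3_hamiltonian (hd : 3 <= d) : hamiltonian (@CK3arc d).
Proof.
apply: hamiltonian_iso CK3_line_iso _; apply: hamiltonian_line_of_eulerian.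
exact: eulerian_of_balanced_connected (regular_outdeg_indeg sK2_regular) (sK2_connected hd).
Qed.

End Kautz.

Theorem mainTheorem13 (d : nat) (hd : 3 <= d) :
  regular_digraph (@CK3arc d) (d - 1) /\
  (#|CKV3 d| = d ^ 3 - d /\ num_arcs (@CK3arc d) = d.+1 * d * (d - 1) ^ 2) /\
  diameter_is (@CK3arc d) 5 /\
  (digraph_iso (@CK3arc d) (@line_arc (KV2 d) (@sK2arc d)) /\
   (forall u v : KV2 d, sK2arc u v = K2arc u v && ~~ K2arc_in_digon u v)) /\
  vertex_transitive (@CK3arc d) /\
  (eulerian (@CK3arc d) /\ hamiltonian (@CK3arc d)).
Proof.
have card_eq : #|CKV3 d| = d ^ 3 - d.
  by rewrite card_CKV3 !expnS expn0 muln1; nia.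
split; first exact: CK3_regular.
split; first by split; [exact: card_eq | exact: CK3_num_arcs].
split; first exact: CK3_diameter.
split; first by split; [exact: CK3_line_iso | exact: sK2arc_K2arc_digon].
split; first exact: CK3_vertex_transitive.
by split; [exact: CK3_eulerian | exact: CK3_hamiltonian].
Qed.
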